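(* For a word $u$ of length $n$, the longest left-seed array $\mathsf{LSeed}^M[1..n]$, where $\mathsf{LSeed}^M[i]=\mathrm{lseedmax}(u[1..i])$, can be computed in $O(n)$ time.
   Context: Words are over a finite alphabet; $u[1..i]$ is the prefix of length $i$. A word $s$ covers $w$ if every position of $w$ lies in some occurrence of $s$ in $w$. A seed of $x$ is a factor $s$ of $x$ such that $x$ is a factor of some word covered by $s$; a left seed is a seed that is a prefix of $x$. $\mathrm{lseedmax}(x)$ is the length of the longest left seed of $x$ shorter than $x$, or $0$ if there is none. *)

From mathcomp Require Import all_boot.
Set Implicit Arguments. Unset Strict Implicit. Unset Printing Implicit Defensive.

Section Words.
Variable A : eqType.

Definition occurs_at (s w : seq A) (j : nat) : bool :=
  take (size s) (drop j w) == s.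

Definition covers (s w : seq A) : Prop :=
  forall p, p < size w -> exists j, occurs_at s w j /\ j <= p < j + size s.

Definition seed (s x : seq A) : Prop :=
  infix s x /\ exists y : seq A, covers s y /\ infix x y.

Definition left_seed (s x : seq A) : Prop := seed s x /\ prefix s x.

Definition lseedmax_is (x : seq A) (v : nat) : Prop :=
  ((0 < v < size x /\ left_seed (take v x) x) \/
   (v = 0 /\ forall l, l < size x -> ~ left_seed (take l x) x)) /\
  (forall l, v < l < size x -> ~ left_seed (take l x) x).
End Words.

Inductive instr : Type :=
  | IConst of nat & nat
  | IAdd of nat & nat & nat
  | ISub of nat & nat & nat        (* ISub r a b   : R[r] := R[a] - R[b] (truncated) *)
  | ILoad of nat & nat
  | IStore of nat & nat
  | IJz of nat & nat
  | IJmp of nat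
  | IHalt.

Definition program := seq instr.
Definition memory := nat -> nat.
Definition config : Type := (nat * memory)%type.

Definition upd (m : memory) (r v : nat) : memory :=
  fun x => if x == r then v else m x.

Definition step (P : program) (c : config) : option config :=
  let: (pc, m) := c in
  match nth IHalt P pc with
  | IConst r k => Some (pc.+1, upd m r k)
  | IAdd r a b => Some (pc.+1, upd m r (m a + m b))
  | ISub r a b => Some (pc.+1, upd m r (m a - m b))
  | ILoad r a => Some (pc.+1, upd m r (m (m a)))
  | IStore a b => Some (pc.+1, upd m (m a) (m b))
  | IJz r l => Some (if m r == 0 then l else pc.+1, m)
  | IJmp l => Some (l, m)
  | IHalt => None
  end.

Fixpoint run (P : program) (k : nat) (c : config) : option config :=
  match k with
  | 0 => Some c
  | k'.+1 => match step P c with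
             | Some c' => run P k' c'
             | None => None
             end
  end.

(* Input encoding of a word u of length n over a finite alphabet:
   R[0] = n, R[i] = (rank of the i-th letter) + 1 for 1 <= i <= n, all other
   registers 0; the machine starts at pc = 0. *)
Definition init_mem (A : finType) (u : seq A) : memory :=
  fun a => if a == 0 then size u
           else match onth u a.-1 with
                | Some x => (enum_rank x).+1
                | None => 0
                end.

(* Word-RAM restriction: during the first k steps from c, every register
   value stays bounded by W (words of O(log n) bits when W is polynomial). *)
Definition values_bounded (P : program) (k : nat) (c : config) (W : nat) : Prop :=
  forall j c', j <= k -> run P j c = Some c' -> forall a, c'.2 a <= W.

From mathcomp Require Import all_boot.
From mathcomp Require Import zify.
Set Implicit Arguments. Unset Strict Implicit. Unset Printing Implicit Defensive.

(* A word x has a proper left seed iff it has a nonempty border, and then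
   x[0..|x|-1) is one: for a border of length b, x is a prefix of
   x[0..p) x[0..|x|-1) with p = |x| - b, which the two occurrences of
   x[0..|x|-1) cover; conversely, in a word covered by a shorter left seed,
   the occurrence covering the last letter of x overlaps the end of x in a
   border.  Hence LSeed^M[i] is i - 1 or 0 according to whether the KMP
   failure function is positive at i, and that function is computed in linear
   time by the KMP algorithm, whose inner loop is paid for by the decrease of
   its current candidate.  The theorem follows by running this algorithm on
   the RAM, with all values linear in n. *)

Section Borders.
Variables (T : eqType) (c : nat -> T).

Definition is_border (q l : nat) : bool :=
  (l < q) && all (fun t => c t == c (q - l + t)) (iota 0 l).

Lemma is_borderP q l :
  reflect (l < q /\ forall t, t < l -> c t = c (q - l + t)) (is_border q l).
Proof.
apply: (iffP andP) => [[lq /allP eqc]|[lq eqc]]; split=> //.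
  by move=> t lt; apply/eqP/eqc; rewrite mem_iota.
by apply/allP=> t; rewrite mem_iota => /andP[_ lt]; apply/eqP/eqc.
Qed.

Definition border (q : nat) : nat := \max_(l < q | is_border q l) l.

Lemma is_border0 q : 0 < q -> is_border q 0.
Proof. by move=> q_gt0; apply/is_borderP. Qed.

Lemma leq_border q l : is_border q l -> l <= border q.
Proof.
move=> bl; have lq : l < q by case/is_borderP: bl.
by rewrite /border (bigmax_sup (Ordinal lq)).
Qed.

Lemma border_is_border q : 0 < q -> is_border q (border q).
Proof.
move=> q_gt0; rewrite /border (bigmax_eq_arg (Ordinal q_gt0)) ?is_border0 //.
by case: arg_maxnP; rewrite ?is_border0.
Qed.

Lemma border_lt q : 0 < q -> border q < q.
Proof. by move=> q_gt0; case/is_borderP: (border_is_border q_gt0). Qed.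

Lemma border1 : border 1 = 0.
Proof. by have := border_lt (ltn0Sn 0); lia. Qed.

Lemma is_border_trans q l l' : is_border q l -> is_border l l' -> is_border q l'.
Proof.
move=> /is_borderP[lq eql] /is_borderP[l'l eql']; apply/is_borderP.
split=> [|t lt]; first lia.
by rewrite eql' // eql; [congr c|]; lia.
Qed.

Lemma is_border_shorter q l l' :
  is_border q l -> is_border q l' -> l' < l -> is_border l l'.
Proof.
move=> /is_borderP[lq eql] /is_borderP[l'q eql'] l'l; apply/is_borderP.
split=> // t lt; rewrite eql' // [RHS]eql; [congr c|]; lia.
Qed.

Lemma is_borderS q l : is_border q.+1 l.+1 = is_border q l && (c l == c q).
Proof.
apply/is_borderP/andP => [[lq eql]|[/is_borderP[lq eql] /eqP eqcl]].
  split; last by apply/eqP; rewrite eql //; congr c; lia.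
  by apply/is_borderP; split=> [|t lt]; [lia | rewrite eql; [congr c|]; lia].
split=> [|t lt]; first lia.
have [tl|->] : t < l \/ t = l by lia.
  by rewrite eql //; congr c; lia.
by rewrite eqcl; congr c; lia.
Qed.

(* Invariant of the inner KMP loop computing border q.+1. *)
Definition kmp_candidate (q k : nat) : Prop :=
  is_border q k /\ forall l, is_border q l -> k < l -> c l <> c q.

Lemma kmp_candidate_border q : 0 < q -> kmp_candidate q (border q).
Proof.
move=> q_gt0; split; first exact: border_is_border.
by move=> l /leq_border; lia.
Qed.

Lemma kmp_candidate_fail q k :
  kmp_candidate q k -> 0 < k -> c k <> c q -> kmp_candidate q (border k).
Proof.
move=> [bk longer] k_gt0 neq; split; first exact: is_border_trans bk (border_is_border k_gt0).
move=> l bl ltl; have [kl|[lk|lk]] : k < l \/ l = k \/ l < k by lia.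
- exact: longer.
- by rewrite lk.
- by have := leq_border (is_border_shorter bk bl lk); lia.
Qed.

Lemma border_extend q k : kmp_candidate q k -> c k = c q -> border q.+1 = k.+1.
Proof.
move=> [bk longer] eqk; apply/eqP; rewrite eqn_leq andbC leq_border; last first.
  by rewrite is_borderS bk eqk eqxx.
have := border_is_border (ltn0Sn q); case: (border q.+1) => // l.
rewrite is_borderS ltnS leqNgt => /andP[bl /eqP eql].
by apply/negP => /longer-/(_ bl).
Qed.

Lemma border_unextendable q :
  kmp_candidate q 0 -> c 0 <> c q -> border q.+1 = 0.
Proof.
move=> [_ longer] neq0; have := border_is_border (ltn0Sn q).
case: (border q.+1) => // -[|l]; rewrite is_borderS => /andP[bl /eqP eql] //.
by case: (longer l.+1 bl).
Qed.

End Borders.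

Lemma border_eq_pattern (T T' : eqType) (c : nat -> T) (c' : nat -> T') q :
  (forall t s, t < q -> s < q -> (c t == c s) = (c' t == c' s)) ->
  border c q = border c' q.
Proof.
move=> eqp; apply: eq_bigl => l; apply/is_borderP/is_borderP => -[lq eql];
  split=> // t lt; apply/eqP; [rewrite -eqp | rewrite eqp]; try lia; exact/eqP/eql.
Qed.

Section LeftSeeds.
Variable A : eqType.
Implicit Type x : seq A.

(* With period p = size x - b, the word y = x[0..p) x[0..n-1) is covered by
   the two occurrences of x[0..n-1) at 0 and at p, and starts with x. *)
Lemma bordered_left_seed x b : 0 < b < size x ->
  take b x = drop (size x - b) x -> left_seed (take (size x).-1 x) x.
Proof.
move=> /andP[b_gt0 b_lt] border_b.
set n := size x in b_lt border_b *; set p := n - b; set s := take n.-1 x.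
set y := take p x ++ s.
have pb : p + b = n by rewrite /p; lia.
have size_s : size s = n.-1 by rewrite size_takel //; lia.
have size_px : size (take p x) = p by rewrite size_takel //; lia.
have xE : x = take p x ++ take b x by rewrite border_b cat_take_drop.
have take_s k : k <= n.-1 -> take k s = take k x by move=> kn; rewrite take_takel.
have sE : s = take p x ++ take b.-1 x.
  rewrite /s {1}xE take_cat size_px ltnNge (_ : p <= n.-1) /=; last lia.
  by rewrite take_takel (_ : n.-1 - p = b.-1) //; lia.
have occ0 : occurs_at s y 0.
  rewrite /occurs_at drop0 size_s take_cat size_px ltnNge (_ : p <= n.-1) //=; last lia.
  rewrite take_s; last lia.
  by rewrite sE (_ : n.-1 - p = b.-1); last lia.
have occp : occurs_at s y p.
  by rewrite /occurs_at drop_cat size_px ltnn subnn drop0 take_size.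
have x_prefix : prefix x y.
  rewrite prefixE /y take_cat size_px ltnNge (_ : p <= n) //=; last lia.
  rewrite take_s; last lia.
  by rewrite [X in _ == X]xE (_ : n - p = b); last lia.
split; last by rewrite prefixE size_s.
split; first by apply: prefixW; rewrite prefixE size_s.
exists y; split; last exact: prefixW.
move=> pos; rewrite size_cat size_px size_s => pos_lt.
have [pos_n|pos_n] := ltnP pos n.-1; [exists 0 | exists p]; split=> //; lia.
Qed.

(* The occurrence of the seed covering the last letter of x inside y starts
   strictly inside x and overlaps its end: this overlap is a border. *)
Lemma left_seed_bordered x l : l < size x -> left_seed (take l x) x ->
  exists2 b, 0 < b < size x & take b x = drop (size x - b) x.
Proof.
move=> lx [[_ [y [cover /infixP[a [z yE]]]]] _].
have [x0 _] : A * unit by case: x lx {cover yE} => // a0; split.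
set n := size x in lx *; set q := size a.
have size_y : size y = q + n + size z by rewrite yE !size_cat addnA.
have size_s : size (take l x) = l by rewrite size_takel // ltnW.
have [j [/eqP occ j_range]] := cover (q + n.-1) (ltac:(lia)).
rewrite size_s in occ j_range.
have jl_y : j + l <= size y.
  have := congr1 size occ; rewrite size_s size_take size_drop; case: ltnP; lia.
have y_at_j t : t < l -> nth x0 y (j + t) = nth x0 x t.
  by move=> tl; rewrite -nth_drop -[RHS](nth_take _ tl) -occ nth_take.
have y_at_q t : t < n -> nth x0 y (q + t) = nth x0 x t.
  by move=> tn; rewrite yE nth_cat ltnNge leq_addr /= addKn nth_cat tn.
exists (n - (j - q)); first lia.
apply: (@eq_from_nth _ x0) => [|t]; first by rewrite size_drop size_takel; lia.
rewrite size_takel ?leq_subr // => t_lt.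
rewrite nth_take // nth_drop -(y_at_j t) -?(y_at_q (n - (n - (j - q)) + t)); try lia.
by congr nth; lia.
Qed.

Lemma is_border_nth (x0 : A) x b : b < size x ->
  is_border (nth x0 x) (size x) b = (take b x == drop (size x - b) x).
Proof.
move=> bx; apply/is_borderP/eqP => [[_ eqb]|eqb]; last first.
  by split=> // t tb; rewrite -nth_drop -eqb nth_take.
apply: (@eq_from_nth _ x0) => [|t]; first by rewrite size_drop size_takel //; lia.
by rewrite size_takel ?(ltnW bx) // => tb; rewrite nth_take // nth_drop eqb.
Qed.

Lemma lseedmax_border (x0 : A) x : 0 < size x ->
  lseedmax_is x (if 0 < border (nth x0 x) (size x) then (size x).-1 else 0).
Proof.
move=> x_gt0; have b_lt := border_lt (nth x0 x) x_gt0.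
have b_border := border_is_border (nth x0 x) x_gt0.
case: posnP => [b0|b_gt0]; last first.
  split=> [|l]; last lia.
  left; split; first lia.
  apply: (bordered_left_seed (b := border (nth x0 x) (size x))); first lia.
  by apply/eqP; rewrite -(is_border_nth x0).
have no_seed l : l < size x -> ~ left_seed (take l x) x.
  move=> lx /(left_seed_bordered lx)[b b_range /eqP].
  by rewrite -(is_border_nth x0); [move/leq_border; rewrite b0; lia | lia].
by split=> [|l /andP[_]]; [right; split|]; last exact: no_seed.
Qed.
End LeftSeeds.

Section Execution.
Variables (prog : program) (W : nat).

Definition mem_bounded (m : memory) : Prop := forall a, m a <= W.

Inductive exec : config -> config -> nat -> Prop :=
| exec0 c : mem_bounded c.2 -> exec c c 0
| execS c c' c'' k :
    mem_bounded c.2 -> step prog c = Some c' -> exec c' c'' k -> exec c c'' k.+1.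

Lemma exec_bounded_end c c' k : exec c c' k -> mem_bounded c'.2.
Proof. by elim. Qed.

Lemma exec_trans c1 c2 c3 k1 k2 :
  exec c1 c2 k1 -> exec c2 c3 k2 -> exec c1 c3 (k1 + k2).
Proof.
elim=> // c c' c'' k bc stepc _ IH /IH exec'.
by rewrite addSn; apply: execS exec'.
Qed.

Lemma exec_run c c' k : exec c c' k -> run prog k c = Some c' /\ values_bounded prog k c W.
Proof.
elim=> [c0 bc0|c0 c1 c2 k0 bc0 stepc0 _ [runc1 valc1]].
  by split=> // [] [|j] //= c1 _ [<-].
split; first by rewrite /= stepc0.
by move=> [|j] c3 jk /=; [case=> <- | rewrite stepc0; apply: valc1].
Qed.

Definition reach (K : nat) (c : config) (pc' : nat) (Q : memory -> Prop) : Prop :=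
  exists k m', [/\ k <= K, exec c (pc', m') k & Q m'].

Lemma reachI K c pc' (Q : memory -> Prop) k m' :
  exec c (pc', m') k -> k <= K -> Q m' -> reach K c pc' Q.
Proof. by exists k, m'. Qed.

Lemma reach_le K K' c pc' Q : K <= K' -> reach K c pc' Q -> reach K' c pc' Q.
Proof. by move=> KK' [k [m' [kK ex Qm']]]; exists k, m'; split=> //; lia. Qed.

Lemma reach_post K c pc' (Q Q' : memory -> Prop) :
  (forall m, Q m -> Q' m) -> reach K c pc' Q -> reach K c pc' Q'.
Proof. by move=> QQ' [k [m' [kK ex Qm']]]; exists k, m'; split=> //; apply: QQ'. Qed.

Lemma reach_seq K1 K2 c pc1 pc2 (Q1 Q2 : memory -> Prop) :
  reach K1 c pc1 Q1 ->
  (forall m, mem_bounded m -> Q1 m -> reach K2 (pc1, m) pc2 Q2) ->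
  reach (K1 + K2) c pc2 Q2.
Proof.
move=> [k1 [m1 [k1K ex1 Q1m1]]] /(_ m1 (exec_bounded_end ex1) Q1m1).
move=> [k2 [m2 [k2K ex2 Q2m2]]]; exists (k1 + k2), m2.
by split=> //; [lia | exact: exec_trans ex2].
Qed.

(* Amortised loop rule: the potential phi pays for iterations costing more
   than body. *)
Lemma reach_loop (Inv : nat -> memory -> Prop) (phi : memory -> nat) pc pc' N body K Q :
  (forall j m, j < N -> mem_bounded m -> Inv j m ->
     exists k m', [/\ k + phi m' <= body + phi m, exec (pc, m) (pc, m') k & Inv j.+1 m']) ->
  (forall m, mem_bounded m -> Inv N m -> reach K (pc, m) pc' Q) ->
  forall m, mem_bounded m -> Inv 0 m -> reach (body * N + K + phi m) (pc, m) pc' Q.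
Proof.
move=> iter exit.
suff loop d j m : j + d = N -> mem_bounded m -> Inv j m ->
    reach (body * d + K + phi m) (pc, m) pc' Q by move=> m; apply: loop.
elim: d j m => [|d IH] j m jdN bm Inv_m.
  by apply: reach_le (exit m bm _); [lia | rewrite -jdN addn0].
have [k1 [m1 [k1_le ex1 Inv_m1]]] := iter j m (ltac:(lia)) bm Inv_m.
have [k2 [m2 [k2_le ex2 Qm2]]] := IH j.+1 m1 (ltac:(lia)) (exec_bounded_end ex1) Inv_m1.
by exists (k1 + k2), m2; split=> //; [lia | exact: exec_trans ex2].
Qed.

Lemma reach_for (Inv : nat -> memory -> Prop) pc pc' N body K Q :
  (forall j m, j < N -> mem_bounded m -> Inv j m -> reach body (pc, m) pc (Inv j.+1)) ->
  (forall m, mem_bounded m -> Inv N m -> reach K (pc, m) pc' Q) ->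
  forall m, mem_bounded m -> Inv 0 m -> reach (body * N + K) (pc, m) pc' Q.
Proof.
move=> iter exit m bm Inv_m; rewrite -[_ + K]addn0.
apply: (reach_loop (phi := fun=> 0)) bm Inv_m => // j m' jN bm' /(iter j m' jN bm').
by move=> [k [m'' [kb ex Inv']]]; exists k, m''; split; rewrite ?addn0.
Qed.
End Execution.

(* Memory layout for an input of length n > 0.  The letters c 0 .. c (n-1)
   arrive in registers 1 .. n and the results go to registers n+1 .. 2n.
   Registers 0 .. 16 serve as scratch, so the letters stored there are first
   saved at 32n .. 32n+15; the word is then copied to 32n+16 .. 33n+15 and its
   border array is built at 33n+17 .. 34n+16.  The output loop exists in two
   copies, with scratch registers 33 .. 40 (for n < 16) and 1 .. 8 (for
   n >= 16), which thus never meet the output registers.  Address 122 halts. *)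

Definition save_prefix : program :=
  [:: IJz 0 122; IAdd 0 0 0; IAdd 0 0 0; IAdd 0 0 0; IAdd 0 0 0; IAdd 0 0 0;
      IStore 0 1; IConst 1 1] ++
  flatten [seq [:: IAdd 0 0 1; IStore 0 j] | j <- iota 2 15].

Definition recover_length : program :=
  [:: (* 38 *) IConst 2 15; ISub 0 0 2; IConst 2 32; IConst 4 0; IConst 5 0;
      (* 43 *) ISub 6 0 5; IJz 6 48; IAdd 4 4 1; IAdd 5 5 2; IJmp 43].

Definition copy_word : program :=
  [:: (* 48 *) IConst 2 16; IAdd 3 0 2; IAdd 7 3 4; IConst 10 16; IConst 8 0;
      (* 53 *) ISub 9 4 8; IJz 9 65; ISub 9 10 8; IJz 9 59; IAdd 11 0 8; IJmp 60;
      (* 59 *) IAdd 11 8 1; ILoad 12 11; IAdd 11 3 8; IStore 11 12; IAdd 8 8 1;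
               IJmp 53].

Definition border_array : program :=
  [:: (* 65 *) IConst 13 1; IConst 14 0; IAdd 11 7 1; IStore 11 14;
      (* 69 *) ISub 9 4 13; IJz 9 89; IAdd 11 3 13; ILoad 15 11;
      (* 73 *) IAdd 11 3 14; ILoad 12 11; ISub 9 12 15; IJz 9 78; IJmp 80;
      (* 78 *) ISub 9 15 12; IJz 9 84;
      (* 80 *) IJz 14 85; IAdd 11 7 14; ILoad 14 11; IJmp 73;
      (* 84 *) IAdd 14 14 1; IAdd 13 13 1; IAdd 11 7 13; IStore 11 14; IJmp 69].

Definition dispatch : program := [:: (* 89 *) IConst 6 0; ISub 9 10 4; IJz 9 107].

Definition output_loop (o e : nat) : program :=
  [:: IConst (o+1) 1; IAdd (o+2) 4 6; IAdd (o+3) 7 6; IAdd (o+4) 4 1; IConst (o+5) 1;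
      ISub (o+6) (o+4) (o+5); IJz (o+6) 122; IAdd (o+7) (o+3) (o+5); ILoad (o+8) (o+7);
      IJz (o+8) (e+11); ISub (o+8) (o+5) (o+1); IAdd (o+7) (o+2) (o+5);
      IStore (o+7) (o+8); IAdd (o+5) (o+5) (o+1); IJmp (e+5)].

Definition lseed_prog : program :=
  save_prefix ++ recover_length ++ copy_word ++ border_array ++ dispatch ++
  output_loop 32 92 ++ output_loop 0 107 ++ [:: IHalt].

Lemma updE m r v a : upd m r v a = if a == r then v else m a.
Proof. by []. Qed.

Lemma bounded_upd W m r v : mem_bounded W m -> v <= W -> mem_bounded W (upd m r v).
Proof. by move=> bm vW a; rewrite updE; case: ifP. Qed.

Ltac decide_eqn := repeat match goal with
  | |- context [?x == ?y :> nat] =>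
      (rewrite (_ : (x == y) = false); last by apply/negbTE/eqP; lia) ||
      (rewrite (_ : (x == y) = true); last by apply/eqP; lia)
  end.

Ltac simpl_mem := rewrite ?updE /=; decide_eqn; rewrite /=.

Ltac bounded := repeat apply: bounded_upd; try assumption; simpl_mem;
  try (apply: leq_trans (leq_subr _ _) _); try (by lia); try by [].

Ltac exec_step := eapply execS; [bounded | rewrite /step /=; reflexivity | simpl_mem].

Tactic Notation "run" int_or_var(k) := do k exec_step; apply: exec0; bounded.

(* One step inside code placed at a symbolic address e, as described by the
   hypotheses at_e0 and at_e; program counters are kept in the form e + k. *)
Ltac exec_step_at e at_e0 at_e := eapply execS; [bounded |
  rewrite /step; cbv beta iota; rewrite ?at_e0 ?at_e //=; reflexivity |
  simpl_mem; rewrite -?addnS -?(addn1 e)].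

Section Phases.
Variables (W n : nat) (c : nat -> nat).
Hypotheses (n_gt0 : 0 < n) (W_ge : 34 * n + 68 <= W).

Local Notation mem_bounded := (mem_bounded W).
Local Notation exec := (exec lseed_prog W).
Local Notation reach := (reach lseed_prog W).

Definition saved_input (i : nat) (m : memory) : Prop :=
  (forall t, t <= i -> t < n -> m (32 * n + t) = c t) /\
  (forall a, i + 2 <= a -> a <= n -> m a = c a.-1).

Lemma saved_input_upd m r v : r <= 16 \/ 32 * n + 16 <= r ->
  saved_input 15 m -> saved_input 15 (upd m r v).
Proof.
move=> r_out [saved rest]; split=> [t ti tn|a ia an]; rewrite updE.
  by rewrite (_ : (_ == r) = false) ?saved //; apply/negbTE/eqP; lia.
by rewrite (_ : (a == r) = false) ?rest //; apply/negbTE/eqP; lia.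
Qed.

Ltac keep_saved := repeat (apply: saved_input_upd; first lia); assumption.

Definition save_state (i : nat) (m : memory) : Prop :=
  [/\ m 0 = 32 * n + i, m 1 = 1 & saved_input i m].

Lemma save_prefix_instr i : i < 15 ->
  nth IHalt lseed_prog (8 + 2 * i) = IAdd 0 0 1 /\
  nth IHalt lseed_prog (8 + 2 * i).+1 = IStore 0 (i + 2).
Proof. by move: i; do 15 case=> //. Qed.

Lemma save_prefix_pair i m : i < 15 -> mem_bounded m -> save_state i m ->
  reach 2 (8 + 2 * i, m) (8 + 2 * i.+1) (save_state i.+1).
Proof.
move=> i15 bm [m0 m1 [saved rest]]; have [add store] := save_prefix_instr i15.
have bm' : mem_bounded (upd m 0 (m 0 + m 1)) by bounded.
eapply reachI.
- eapply execS; [exact: bm | by rewrite /step add |].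
  eapply execS; [exact: bm' | by rewrite /step store |].
  rewrite (_ : (8 + 2 * i).+2 = 8 + 2 * i.+1); last lia.
  apply: exec0; bounded; exact: leq_trans (bm _) _.
- done.
- split; simpl_mem; try lia; split=> [t ti tn|a ia an]; simpl_mem.
    have [ti'|t_eq] : t <= i \/ t = i.+1 by lia.
      by decide_eqn; apply: saved.
    by subst t; decide_eqn; rewrite rest //; [congr c|]; lia.
  by apply: rest; lia.
Qed.

Lemma save_prefix_loop d i m : i + d = 15 -> mem_bounded m -> save_state i m ->
  reach (2 * d) (8 + 2 * i, m) 38 (save_state 15).
Proof.
elim: d i m => [|d IH] i m id15 bm st.
  by rewrite addn0 in id15; subst i; apply: (reachI (k := 0) (m' := m)) st => //; exact: exec0.
rewrite mulnS; apply: reach_seq (save_prefix_pair _ bm st) _; first lia.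
by move=> m' bm' st'; apply: IH bm' st'; lia.
Qed.

Lemma save_prefix_correct m : mem_bounded m -> m 0 = n ->
  (forall a, 0 < a -> a <= n -> m a = c a.-1) -> reach 38 (0, m) 38 (save_state 15).
Proof.
move=> bm m0 input.
apply: (reach_seq (K1 := 8) (K2 := 30) (pc1 := 8) (Q1 := save_state 0)); last first.
  by move=> m' bm' st; exact: (save_prefix_loop (d := 15) (i := 0)).
eapply reachI; [run 8 | done |].
split; simpl_mem; try lia; split=> [t t0 tn|a a2 an]; simpl_mem.
  by rewrite (_ : t = 0) ?input //; lia.
by rewrite input //; lia.
Qed.

Definition length_state j m :=
  [/\ m 0 = 32 * n, m 1 = 1, m 2 = 32, m 4 = j & m 5 = 32 * j] /\ saved_input 15 m.

Lemma recover_length_correct m : mem_bounded m -> save_state 15 m ->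
  reach (5 * n + 7) (38, m) 48
    (fun m' => [/\ m' 0 = 32 * n, m' 1 = 1, m' 4 = n & saved_input 15 m']).
Proof.
move=> bm [m0 m1 saved].
apply: (reach_le (K := 5 + (5 * n + 2))); first lia.
apply: (reach_seq (pc1 := 43) (Q1 := length_state 0)).
  by eapply reachI; [run 5 | done | split; [split; simpl_mem; lia | keep_saved]].
move=> m' bm' st.
apply: (reach_for (Inv := length_state)) bm' st => [j m2 jn bm2|m2 bm2].
  move=> [[r0 r1 r2 r4 r5] sv].
  by eapply reachI; [run 5 | done | split; [split; simpl_mem; lia | keep_saved]].
move=> [[r0 r1 r2 r4 r5] sv].
by eapply reachI; [run 2 | done | split; simpl_mem; try lia; keep_saved].
Qed.

Definition word_copied j m : Prop := forall t, t < j -> m (32 * n + 16 + t) = c t.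

Definition layout_regs m : Prop :=
  [/\ m 1 = 1, m 3 = 32 * n + 16, m 4 = n, m 7 = 33 * n + 16 & m 10 = 16].

Definition copy_state j m : Prop :=
  [/\ saved_input 15 m, word_copied j m & [/\ m 0 = 32 * n, m 8 = j & layout_regs m]].

Lemma copy_word_correct m : mem_bounded m ->
  [/\ m 0 = 32 * n, m 1 = 1, m 4 = n & saved_input 15 m] ->
  reach (11 * n + 7) (48, m) 65 (fun m' => word_copied n m' /\ layout_regs m').
Proof.
move=> bm [r0 r1 r4 sv].
apply: (reach_le (K := 5 + (11 * n + 2))); first lia.
apply: (reach_seq (pc1 := 53) (Q1 := copy_state 0)).
  by eapply reachI; [run 5 | done | split; [keep_saved | by [] | repeat split; simpl_mem; lia]].
move=> m' bm' st.
apply: (reach_for (Inv := copy_state)) bm' st => [j m2 jn bm2|m2 bm2].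
  move=> [sv2 wc [r0' r8 [r1' r3 r4' r7 r10]]].
  have [j16|j16] := ltnP j 16.
  - have loaded : m2 (m2 0 + m2 8) = c j by rewrite r0' r8; apply: sv2.1.
    eapply reachI; [run 11 | done |].
    split; [keep_saved | | repeat split; simpl_mem; lia].
    move=> t tj; simpl_mem; have [tj'|t_eq] : t < j \/ t = j by lia.
      by decide_eqn; apply: wc.
    by subst t; decide_eqn.
  - have loaded : m2 (m2 8 + m2 1) = c j by rewrite r8 r1' addn1; apply: sv2.2; lia.
    eapply reachI; [run 10 | done |].
    split; [keep_saved | | repeat split; simpl_mem; lia].
    move=> t tj; simpl_mem; have [tj'|t_eq] : t < j \/ t = j by lia.
      by decide_eqn; apply: wc.
    by subst t; decide_eqn.
move=> [sv2 wc [r0' r8 [r1' r3 r4' r7 r10]]].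
eapply reachI; [run 2 | done | split; [|repeat split; simpl_mem; lia]].
by move=> t tn; simpl_mem; apply: wc.
Qed.

Definition borders_stored q m : Prop :=
  forall p, 0 < p -> p <= q -> m (33 * n + 16 + p) = border c p.

Definition outer_state q m : Prop :=
  [/\ word_copied n m, borders_stored q m, layout_regs m &
      [/\ m 13 = q, m 14 = border c q & 0 < q <= n]].

Definition inner_state q k m : Prop :=
  [/\ word_copied n m, borders_stored q m, layout_regs m &
      [/\ m 13 = q, m 14 = k, m 15 = c q & 0 < q < n]] /\ kmp_candidate c q k.

Lemma borders_stored_succ q m m' : borders_stored q m ->
  (forall p, 0 < p -> p <= q -> m' (33 * n + 16 + p) = m (33 * n + 16 + p)) ->
  m' (33 * n + 16 + q.+1) = border c q.+1 -> borders_stored q.+1 m'.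
Proof.
move=> stored same new p p0; rewrite leq_eqVlt ltnS => /orP[/eqP->|pq] //.
by rewrite same ?stored.
Qed.

(* Each round of the inner loop costs at most 10 steps and strictly lowers the
   candidate k, which pays for it. *)
Lemma kmp_inner_correct q k m : mem_bounded m -> inner_state q k m ->
  exists k' m', [/\ k' + 10 * m' 14 <= 10 * k + 21, exec (73, m) (69, m') k' &
                    outer_state q.+1 m'].
Proof.
elim/ltn_ind: k m => k IH m bm.
move=> [[wc stored [r1 r3 r4 r7 r10] [r13 r14 r15 /andP[q0 qn]]] cand].
have kq : k < q by case: cand => /is_borderP[].
have loaded : m (m 3 + m 14) = c k by rewrite r3 r14; apply: wc; lia.
have [eqk|neqk] := eqVneq (c k) (c q).
  have border_q := border_extend cand eqk.
  eexists _, _; split; [| run 11 | ]; first by simpl_mem; lia.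
  split; [ by move=> t tn; simpl_mem; apply: wc | | by split; simpl_mem; lia | ].
    by apply: (borders_stored_succ stored) => [p p0 pq|]; simpl_mem; rewrite ?border_q; lia.
  by split; simpl_mem; lia.
have [k0|k_gt0] := posnP k.
  move: k0 r14 neqk cand loaded => -> r14 neqk cand loaded.
  have border_q := border_unextendable cand (elimN eqP neqk).
  have [lt|gt] : c 0 < c q \/ c q < c 0 by lia.
  + eexists _, _; split; [| run 11 | ]; first by simpl_mem; lia.
    split; [ by move=> t tn; simpl_mem; apply: wc | | by split; simpl_mem; lia | ].
      by apply: (borders_stored_succ stored) => [p p0 pq|]; simpl_mem; rewrite ?border_q; lia.
    by split; simpl_mem; rewrite ?border_q; lia.
  + eexists _, _; split; [| run 10 | ]; first by simpl_mem; lia.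
    split; [ by move=> t tn; simpl_mem; apply: wc | | by split; simpl_mem; lia | ].
      by apply: (borders_stored_succ stored) => [p p0 pq|]; simpl_mem; rewrite ?border_q; lia.
    by split; simpl_mem; rewrite ?border_q; lia.
have link : m (m 7 + m 14) = border c k by rewrite r7 r14; apply: stored; lia.
have cand' := kmp_candidate_fail cand k_gt0 (elimN eqP neqk).
have shorter := border_lt c k_gt0.
have [k1 [m1 [ex1 k1_le st1]]] : exists k1 m1, [/\ exec (73, m) (73, m1) k1, k1 <= 10 &
                                                  inner_state q (border c k) m1].
  have [lt|gt] : c k < c q \/ c q < c k by lia.
  + eexists _, _; split; [run 10 | done | split=> //].
    split; [ by move=> t tn; simpl_mem; apply: wc | by move=> p p0 pq; simpl_mem; apply: stored
           | by split; simpl_mem; lia | by split; simpl_mem; lia ].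
  + eexists _, _; split; [run 9 | done | split=> //].
    split; [ by move=> t tn; simpl_mem; apply: wc | by move=> p p0 pq; simpl_mem; apply: stored
           | by split; simpl_mem; lia | by split; simpl_mem; lia ].
have [k2 [m2 [k2_le ex2 st2]]] := IH _ shorter m1 (exec_bounded_end ex1) st1.
by exists (k1 + k2), m2; split=> //; [lia | exact: exec_trans ex2].
Qed.

Lemma border_array_correct m : mem_bounded m -> word_copied n m -> layout_regs m ->
  reach (25 * n + 6) (65, m) 89 (fun m' => borders_stored n m' /\ layout_regs m').
Proof.
move=> bm wc [r1 r3 r4 r7 r10].
apply: (reach_le (K := 4 + (25 * n.-1 + 2))); first lia.
apply: (reach_seq (pc1 := 69) (Q1 := outer_state 1)).
  eapply reachI; [run 4 | done |].
  split; [by move=> t tn; simpl_mem; apply: wc | | by split; simpl_mem; lia | ].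
    by move=> p p0 p1; rewrite (_ : p = 1); [simpl_mem; rewrite border1 | lia].
  by split; simpl_mem; rewrite ?border1; lia.
move=> m1 bm1 st1; have [_ _ _ [_ r14 _]] := st1.
apply: (reach_le (K := 25 * n.-1 + 2 + 10 * m1 14)); first by rewrite r14 border1 addn0.
apply: (reach_loop (Inv := fun j => outer_state j.+1) (phi := fun m => 10 * m 14))
  bm1 st1 => [j m2 jn bm2|m2 bm2].
  move=> [wc2 stored2 [r1' r3' r4' r7' r10'] [r13 r14' /andP[q0 qn]]].
  have loaded : m2 (m2 3 + m2 13) = c j.+1 by rewrite r3' r13; apply: wc2; lia.
  have [k1 [m3 [ex1 k1_le st3]]] : exists k1 m3,
      [/\ exec (69, m2) (73, m3) k1, k1 <= 4 & inner_state j.+1 (border c j.+1) m3].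
    eexists _, _; split; [run 4 | done | split; last exact: kmp_candidate_border].
    split; [ by move=> t tn; simpl_mem; apply: wc2
           | by move=> p p0 pq; simpl_mem; apply: stored2
           | by split; simpl_mem; lia | by split; simpl_mem; lia ].
  have [k2 [m4 [k2_le ex2 st4]]] := kmp_inner_correct (exec_bounded_end ex1) st3.
  by exists (k1 + k2), m4; split=> //; [rewrite /= r14'; lia | exact: exec_trans ex2].
move=> [wc2 stored2 [r1' r3' r4' r7' r10'] [r13 r14' /andP[q0 qn]]].
eapply reachI; [run 2 | done | split; last by split; simpl_mem; lia].
rewrite prednK // in stored2.
by move=> p p0 pn; simpl_mem; apply: stored2.
Qed.

Definition lseed_val (p : nat) : nat := if 0 < border c p then p.-1 else 0.

Definition outputs_written j m : Prop :=
  forall p, 0 < p -> p <= j -> m (n + p) = lseed_val p.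

Definition output_state o j m : Prop :=
  [/\ borders_stored n m, outputs_written j m &
      [/\ m (o + 1) = 1, m (o + 2) = n, m (o + 3) = 33 * n + 16, m (o + 4) = n.+1 &
          m (o + 5) = j.+1]].

Lemma output_loop_correct o e m :
  (forall t, t < 15 -> nth IHalt lseed_prog (e + t) = nth IHalt (output_loop o e) t) ->
  (o = 32 /\ n < 16) \/ (o = 0 /\ 16 <= n) ->
  mem_bounded m -> borders_stored n m ->
  [/\ m 1 = 1, m 4 = n, m 6 = 0 & m 7 = 33 * n + 16] ->
  reach (5 + (10 * n + 2)) (e, m) 122 (outputs_written n).
Proof.
move=> at_e scratch bm stored [r1 r4 r6 r7].
have at_e0 : nth IHalt lseed_prog e = nth IHalt (output_loop o e) 0.
  by rewrite -[e in LHS]addn0 at_e.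
apply: (reach_seq (pc1 := e + 5) (Q1 := output_state o 0)).
  case: scratch => -[o_eq _]; subst o.
  1,2: eapply reachI; [do 5 exec_step_at e at_e0 at_e; apply: exec0; bounded | done |].
  1,2: split; [by move=> p p0 pn; simpl_mem; apply: stored | by move=> p; lia |
                by split; simpl_mem; lia].
move=> m1 bm1 st1.
apply: (reach_for (Inv := output_state o)) bm1 st1 => [j m2 jn bm2|m2 bm2].
  move=> [stored2 written [s1 s2 s3 s4 s5]].
  have loaded : m2 (m2 (o + 3) + m2 (o + 5)) = border c j.+1.
    by rewrite s3 s5; apply: stored2; lia.
  have [b0|b_gt0] := posnP (border c j.+1).
  - eapply reachI; [do 9 exec_step_at e at_e0 at_e; apply: exec0; bounded | done |].
    split; [by move=> p p0 pn; simpl_mem; apply: stored2 | | by split; simpl_mem; lia].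
    move=> p p0 pj; simpl_mem; have [pj'|p_eq] : p <= j \/ p = j.+1 by lia.
      by decide_eqn; apply: written.
    by subst p; decide_eqn; rewrite loaded /lseed_val b0.
  - eapply reachI; [do 10 exec_step_at e at_e0 at_e; apply: exec0; bounded | done |].
    split; [by move=> p p0 pn; simpl_mem; apply: stored2 | | by split; simpl_mem; lia].
    move=> p p0 pj; simpl_mem; have [pj'|p_eq] : p <= j \/ p = j.+1 by lia.
      by decide_eqn; apply: written.
    by subst p; decide_eqn; rewrite /lseed_val b_gt0; lia.
move=> [stored2 written [s1 s2 s3 s4 s5]].
eapply reachI; [do 2 exec_step_at e at_e0 at_e; apply: exec0; bounded | done |].
by move=> p p0 pn; simpl_mem; apply: written.
Qed.

Lemma output_correct m : mem_bounded m -> borders_stored n m -> layout_regs m ->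
  reach (10 * n + 10) (89, m) 122 (outputs_written n).
Proof.
move=> bm stored [r1 r3 r4 r7 r10].
apply: (reach_le (K := 3 + (5 + (10 * n + 2)))); first lia.
pose ready m' := borders_stored n m' /\ [/\ m' 1 = 1, m' 4 = n, m' 6 = 0 & m' 7 = 33 * n + 16].
have [small|large] := ltnP n 16.
- apply: (reach_seq (pc1 := 92) (Q1 := ready)).
    eapply reachI; [run 3 | done | split; last by split; simpl_mem; lia].
    by move=> p p0 pn; simpl_mem; apply: stored.
  move=> m' bm' [stored' regs']; apply: (output_loop_correct (o := 32)) => //; last lia.
  by do 15 case=> //.
- apply: (reach_seq (pc1 := 107) (Q1 := ready)).
    eapply reachI; [run 3 | done | split; last by split; simpl_mem; lia].
    by move=> p p0 pn; simpl_mem; apply: stored.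
  move=> m' bm' [stored' regs']; apply: (output_loop_correct (o := 0)) => //; last lia.
  by do 15 case=> //.
Qed.

Lemma lseed_prog_correct m : mem_bounded m -> m 0 = n ->
  (forall a, 0 < a -> a <= n -> m a = c a.-1) ->
  reach (51 * n + 68) (0, m) 122 (outputs_written n).
Proof.
move=> bm m0 input.
apply: (reach_le (K := 38 + (5 * n + 7 + (11 * n + 7 + (25 * n + 6 + (10 * n + 10))))));
  first lia.
apply: reach_seq (save_prefix_correct bm m0 input) _ => m1 bm1 st1.
apply: reach_seq (recover_length_correct bm1 st1) _ => m2 bm2 st2.
apply: reach_seq (copy_word_correct bm2 st2) _ => m3 bm3 [copied regs3].
apply: reach_seq (border_array_correct bm3 copied regs3) _ => m4 bm4 [stored regs4].
exact: output_correct.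
Qed.
End Phases.

Lemma word_size_bound n s : 34 * n + 68 <= n.+2 ^ (s + 7) /\ s <= n.+2 ^ (s + 7).
Proof.
have grow k : k <= s + 7 -> n.+2 ^ k <= n.+2 ^ (s + 7) by move=> ks; rewrite leq_pexp2l.
split; last exact: leq_trans (ltnW (ltn_expl s _)) (grow _ (leq_addr _ _)).
apply: leq_trans (grow 7 (leq_addl _ _)).
have : 2 ^ 6 <= n.+2 ^ 6 by rewrite leq_exp2r.
by rewrite expnS; nia.
Qed.

Section Input.
Variables (A : finType) (u : seq A).

Lemma init_mem_letter x0 t : t < size u -> init_mem u t.+1 = (enum_rank (nth x0 u t)).+1.
Proof. by move=> tu; rewrite /init_mem /= onthE (nth_map x0). Qed.

Lemma init_mem_bounded W : size u <= W -> #|A| <= W -> mem_bounded W (init_mem u).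
Proof.
move=> uW AW [|a] //=; rewrite /init_mem /=.
by case: onth => // x; apply: leq_trans AW; exact: ltn_ord.
Qed.

Lemma lseedmax_prefix i : 0 < i <= size u ->
  lseedmax_is (take i u) (lseed_val (fun t => init_mem u t.+1) i).
Proof.
move=> /andP[i0 iu]; have x0 : A by move: iu; case: (u) => [|a _] //=; rewrite leqNgt i0.
have size_i : size (take i u) = i by rewrite size_takel.
rewrite /lseed_val.
have -> : border (fun t => init_mem u t.+1) i = border (nth x0 (take i u)) i.
  apply: border_eq_pattern => t s ti si.
  rewrite !(init_mem_letter x0) ?nth_take; try lia.
  by rewrite eqSS (inj_eq val_inj) (inj_eq enum_rank_inj).
by have := lseedmax_border x0 (x := take i u); rewrite size_i; apply.
Qed.
End Input.

Theorem theorem3 (A : finType) :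
  exists (P : program) (C D : nat),
    forall u : seq A,
      exists (k : nat) (pc : nat) (m : memory),
        [/\ k <= C * (size u).+1,
            run P k (0, init_mem u) = Some (pc, m),
            step P (pc, m) = None,
            values_bounded P k (0, init_mem u) ((size u).+2 ^ D) &
            forall i, 1 <= i <= size u -> lseedmax_is (take i u) (m (size u + i))].
Proof.
exists lseed_prog, 68, (#|A| + 7) => u.
have [W_lin W_A] := word_size_bound (size u) #|A|.
have bm : mem_bounded ((size u).+2 ^ (#|A| + 7)) (init_mem u).
  by apply: init_mem_bounded => //; lia.
suff [k [m [k_le ex outputs]]] :
    reach lseed_prog ((size u).+2 ^ (#|A| + 7)) (68 * (size u).+1) (0, init_mem u) 122
      (fun m => forall i, 1 <= i <= size u -> lseedmax_is (take i u) (m (size u + i))).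
  by have [run_k bounded] := exec_run ex; exists k, 122, m.
have [u0|u_gt0] := posnP (size u).
  move: (init_mem u) bm (erefl : init_mem u 0 = size u) => m bm m0.
  by eapply reachI; [run 1 | lia | move=> i; lia].
apply: reach_le (reach_post _ (lseed_prog_correct u_gt0 W_lin bm _ _)); first lia.
- by move=> m written i /andP[i0 iu]; rewrite written //; apply: lseedmax_prefix; lia.
- by [].
- by move=> a a0 au /=; rewrite prednK.
Qed.
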